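(* Fix integers $s,t\ge2$ and let $W=\{w_1<w_2<\cdots<w_k\}$ be a subset of $\{s+1,s+2,\ldots,st\}$. Let $\Omega_{s,t}(W)$ be the collection of all sets of integers $I=\{i_1<i_2<\cdots<i_k\}$ satisfying $w_\ell-s+\ell\leq i_\ell\leq w_\ell-1$ for all $\ell\in[k]$. Then \[\vert \Omega_{s,t}(W)\vert\geq \frac{s-k}{s}\binom{s+k-1}{k}.\] *)

From mathcomp Require Import all_boot all_order all_algebra.
Set Implicit Arguments. Unset Strict Implicit. Unset Printing Implicit Defensive.

(* W = {w_1 < ... < w_k} is encoded as the strictly increasing sequence W
   (sorted ltn), with w_(l+1) = nth 0 W l for l < k = size W (0-based index). *)
Definition W_ok (s t : nat) (W : seq nat) : bool :=
  sorted ltn W && all (fun w => (s.+1 <= w) && (w <= s * t)) W.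

(* Since w_l >= s+1, all such i_l are positive integers < s*t,
   so they live in 'I_(s*t).  With 0-based index j (l = j+1):
     w_j - s + (j+1) <= i_j   <->  w_j + j.+1 <= i_j + s   (no truncation)
     i_j <= w_j - 1           <->  i_j < w_j. *)
Definition Omega (s t : nat) (W : seq nat) : {set (size W).-tuple 'I_(s * t)} :=
  [set I : (size W).-tuple 'I_(s * t) |
     sorted ltn (map val I) &&
     [forall j : 'I_(size W),
        (nth 0 W j + j.+1 <= val (tnth I j) + s) && (val (tnth I j) < nth 0 W j)]].

(* Reversing the order of the shifts, I_l = w_l - d_(k+1-l) sends every
   nondecreasing sequence 1 <= d_1 <= ... <= d_k with d_j <= (s - k) + j - 1
   injectively into Omega_{s,t}(W): the upper bound on d is the lower bound on
   I, positivity of d is the upper bound, and monotonicity of d together with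
   w_1 < ... < w_k makes I strictly increasing.  Such sequences are counted by
   the ballot number n/(n+k) C(n+2k-1, k) with n = s - k, which is the
   claimed bound. *)
From mathcomp Require Import all_boot all_order all_algebra zify.
Import Order.TTheory GRing.Theory Num.Theory.

Set Implicit Arguments.
Unset Strict Implicit.
Unset Printing Implicit Defensive.

Definition ballot_seq (k n : nat) (d : seq nat) : Prop :=
  [/\ size d = k,
      forall j, j < k -> 0 < nth 0 d j <= n + j
    & forall j, j.+1 < k -> nth 0 d j <= nth 0 d j.+1].

(* The first term is a = n.+2 - u with u in [2, n.+1]; subtracting a - 1 from
   the remaining terms leaves an element of ballot_seqs k' u. *)
Fixpoint ballot_seqs (k n : nat) : seq (seq nat) :=
  if k is k'.+1 then
    [seq (n.+2 - u) :: map (addn (n.+1 - u)) c | u <- iota 2 n, c <- ballot_seqs k' u]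
  else [:: [::]].

Lemma ballot_seqsP k n d : d \in ballot_seqs k n -> ballot_seq k n d.
Proof.
elim: k n d => [|k IH] n d /=.
  by rewrite inE => /eqP->; split=> // j.
case/allpairsPdep => u [c [+ /IH[Hsize Hbound Hmono] ->]].
rewrite mem_iota => /andP[u_ge2 u_le].
split; first by rewrite /= size_map Hsize.
- case=> [|j] /= Hj; first lia.
  rewrite (nth_map 0) ?Hsize //; have := Hbound j Hj; lia.
- case=> [|j] /= Hj.
    rewrite (nth_map 0) ?Hsize; last lia.
    have := Hbound 0 ltac:(lia); lia.
  rewrite !(nth_map 0) ?Hsize; try lia.
  have := Hmono j Hj; lia.
Qed.

Lemma ballot_seqs_uniq k n : uniq (ballot_seqs k n).
Proof.
elim: k n => [|k IH] n //=.
apply: allpairs_uniq_dep => [|u _|]; [exact: iota_uniq | exact: IH |].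
move=> [u1 c1] [u2 c2] /allpairsPdep[x1 [y1 [Hx1 _ [-> ->]]]].
move=> /allpairsPdep[x2 [y2 [Hx2 _ [-> ->]]]] /= [Ehead Etail].
move: Hx1 Hx2; rewrite !mem_iota => Hx1 Hx2.
have Ex : x1 = x2 by lia.
by subst x2; move/inj_map: Etail => ->; [|exact: addnI].
Qed.

Lemma size_ballot_seqsS k n :
  size (ballot_seqs k.+1 n.+1) = size (ballot_seqs k.+1 n) + size (ballot_seqs k n.+2).
Proof.
rewrite !size_allpairs_dep.
have -> : iota 2 n.+1 = iota 2 n ++ [:: n.+2] by rewrite -(addn1 n) iotaD add2n addn1.
by rewrite map_cat sumn_cat /= addn0.
Qed.

Lemma size_ballot_seqs1 n : size (ballot_seqs 1 n) = n.
Proof. by elim: n => [|n IHn] //; rewrite size_ballot_seqsS IHn addn1. Qed.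

Lemma size_ballot_seqs_add_bin k n :
  size (ballot_seqs k.+1 n) + 'C(n + k + k.+1, k) = 'C(n + k + k.+1, k.+1).
Proof.
elim: k n => [|k IH] n.
  by rewrite size_ballot_seqs1 bin0 !addn0 addn1 bin1.
elim: n => [|n IHn].
  rewrite add0n -[RHS]bin_sub; last lia.
  by congr binomial; lia.
rewrite size_ballot_seqsS.
have := IH n.+2.
have -> : n.+2 + k + k.+1 = n + k.+1 + k.+2 by lia.
have -> : n.+1 + k.+1 + k.+2 = (n + k.+1 + k.+2).+1 by lia.
move: IHn; rewrite !binS; lia.
Qed.

Lemma size_ballot_seqs k n :
  (n + k) * size (ballot_seqs k n) = n * 'C(n + k + k - 1, k).
Proof.
case: k => [|k]; first by rewrite /= bin0 !muln1 addn0.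
have := size_ballot_seqs_add_bin k n; have := mul_bin_left (n + k + k.+1) k.
have -> : n + k.+1 + k.+1 - 1 = n + k + k.+1 by lia.
have -> : n + k + k.+1 - k = n + k.+1 by lia.
nia.
Qed.

Section BallotToOmega.

Variables (s t : nat) (W : seq nat).
Hypothesis st_gt0 : 0 < s * t.
Hypothesis W_okW : W_ok s t W.

Local Notation k := (size W).
Local Notation n := (s - k).

Hypothesis k_le_s : k <= s.

Lemma W_ltn i : i.+1 < k -> nth 0 W i < nth 0 W i.+1.
Proof. by case/andP: W_okW => /(sortedP 0) + _; apply. Qed.

Lemma W_bounds i : i < k -> s.+1 <= nth 0 W i <= s * t.
Proof. by case/andP: W_okW => _ /(all_nthP 0); apply. Qed.

Lemma W_gt i : i < k -> s < nth 0 W i.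
Proof. by case/W_bounds/andP. Qed.

Definition omega_of (d : seq nat) : k.-tuple 'I_(s * t) :=
  [tuple insubd (Ordinal st_gt0) (nth 0 W j - nth 0 d (k - j.+1)) | j < k].

Lemma omega_ofE d (i : 'I_k) : ballot_seq k n d ->
  val (tnth (omega_of d) i) = nth 0 W i - nth 0 d (k - i.+1).
Proof.
case=> _ Hbound _.
have lt_st : nth 0 W i - nth 0 d (k - i.+1) < s * t.
  have /andP[_ W_le_st] := W_bounds (ltn_ord i).
  have := Hbound (k - i.+1) ltac:(have := ltn_ord i; lia).
  move: W_le_st; set N := s * t; lia.
by rewrite tnth_mktuple val_insubd lt_st.
Qed.

Lemma omega_of_inj : {in ballot_seqs k n &, injective omega_of}.
Proof.
move=> d1 d2 /ballot_seqsP H1 /ballot_seqsP H2 E.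
have [size1 bound1 _] := H1; have [size2 bound2 _] := H2.
apply: (@eq_from_nth _ 0); first by rewrite size1 size2.
move=> i; rewrite size1 => Hi.
have Hj : k - i.+1 < k by lia.
have := congr1 (fun I => val (tnth I (Ordinal Hj))) E.
rewrite /= !omega_ofE //=.
have -> : k - (k - i.+1).+1 = i by lia.
have := W_gt Hj; have := bound1 i Hi; have := bound2 i Hi; lia.
Qed.

Lemma omega_of_sorted d : ballot_seq k n d -> sorted ltn (map val (omega_of d)).
Proof.
move=> Hd; have [_ Hbound Hmono] := Hd.
apply/(sortedP 0) => i; rewrite size_map size_tuple => Hi.
have Hi0 : i < k by lia.
rewrite !(nth_map (Ordinal st_gt0)) ?size_tuple //.
rewrite -(tnth_nth _ _ (Ordinal Hi0)) -(tnth_nth _ _ (Ordinal Hi)) !omega_ofE //=.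
have := W_ltn Hi; have := W_gt Hi0; have := Hbound (k - i.+1) ltac:(lia).
have := Hbound (k - i.+2) ltac:(lia); have := Hmono (k - i.+2) ltac:(lia).
have -> : (k - i.+2).+1 = k - i.+1 by lia.
lia.
Qed.

Lemma omega_of_in_Omega d : d \in ballot_seqs k n -> omega_of d \in Omega s t W.
Proof.
move=> /ballot_seqsP Hd; have [_ Hbound _] := Hd.
rewrite inE omega_of_sorted //=; apply/forallP => j; rewrite omega_ofE //.
have j_lt := ltn_ord j.
have := W_gt j_lt; have := Hbound (k - j.+1) ltac:(lia).
by move=> *; apply/andP; split; lia.
Qed.

Lemma size_ballot_seqs_le_card_Omega : size (ballot_seqs k n) <= #|Omega s t W|.
Proof.
rewrite -(size_map omega_of) cardE; apply: uniq_leq_size.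
  by rewrite map_inj_in_uniq ?ballot_seqs_uniq //; exact: omega_of_inj.
by move=> _ /mapP[d Hd ->]; rewrite mem_enum omega_of_in_Omega.
Qed.

End BallotToOmega.

Local Open Scope ring_scope.

Theorem lemma3 (s t : nat) (W : seq nat) :
  (2 <= s)%N -> (2 <= t)%N -> W_ok s t W ->
  ((s%:Z - (size W)%:Z)%:~R / s%:R) * ('C(s + size W - 1, size W))%:R
    <= (#|Omega s t W|)%:R :> rat.
Proof.
move=> s_ge2 t_ge2 W_okW.
have [s_le_k|k_lt_s] := leqP s (size W).
  apply: le_trans (ler0n _ _); apply: mulr_le0_ge0 (ler0n _ _).
  apply: mulr_le0_ge0; last by rewrite invr_ge0 ler0n.
  by rewrite lerz0 subr_le0 lez_nat.
have st_gt0 : (0 < s * t)%N by rewrite muln_gt0; lia.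
have card := size_ballot_seqs_le_card_Omega st_gt0 W_okW (ltnW k_lt_s).
have count := size_ballot_seqs (size W) (s - size W).
rewrite subnK in count; last exact: ltnW.
rewrite subzn; last exact: ltnW.
rewrite pmulrn mulrAC ler_pdivrMr ?ltr0n; last lia.
rewrite -!natrM ler_nat -count mulnC.
exact: leq_mul.
Qed.
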